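(* Let $(P,\leq)$ be a partially ordered set, $S(P):=\{(p,q)\in P^2: p\leq q,\ p\neq q\}$ its strict order, and $O(P)$ the lattice of suborders of $P$, i.e. the set of transitively closed subsets of $S(P)$ ordered by inclusion. Then $O(P)$ is order-scattered if and only if $S(P)$ is finite.
   Context: A poset is order-scattered if it contains no subset order-isomorphic to the chain $\mathbb{Q}$ of rationals. A subset $R\subseteq S(P)$ is transitively closed if $(a,b),(b,c)\in R$ imply $(a,c)\in R$. *)

From HB Require Import structures.
From mathcomp Require Import all_boot all_order all_algebra.
From mathcomp Require Import boolp classical_sets cardinality.
Set Implicit Arguments. Unset Strict Implicit. Unset Printing Implicit Defensive.
Import Order.TTheory GRing.Theory Num.Theory.
Local Open Scope classical_set_scope.

Definition strict_order {d : Order.disp_t} (P : porderType d) : set (P * P)%type :=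
  [set pq | (pq.1 <= pq.2)%O /\ pq.1 <> pq.2].
Arguments strict_order {d} P.

Definition trans_closed (T : Type) (R : set (T * T)) : Prop :=
  forall a b c, R (a, b) -> R (b, c) -> R (a, c).

Definition suborders {d : Order.disp_t} (P : porderType d) : set (set (P * P)%type) :=
  [set R | R `<=` strict_order P /\ trans_closed R].
Arguments suborders {d} P.

Definition order_scattered (T : Type) (le : T -> T -> Prop) (A : set T) : Prop :=
  ~ exists f : rat -> T,
      (forall q, A (f q)) /\ (forall x y : rat, (x <= y)%R <-> le (f x) (f y)).

From mathcomp Require Import all_boot all_order all_algebra finmap.
From mathcomp Require Import boolp classical_sets cardinality functions.
Import Order.TTheory Num.Theory.
Local Open Scope classical_set_scope.

(* If S(P) is finite, a copy of Q inside O(P) would give an infinite strictly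
   increasing chain of subsets of the finite set S(P).  If S(P) is infinite, it
   contains an infinite set X of pairs no two of which compose, namely the pairs
   (a, b) with b > a for a fixed a with infinitely many successors, or else the
   pairs (a, m) with m maximal; every subset of such an X is a suborder, and the
   power set of a countably infinite set contains a copy of Q. *)

Lemma order_scattered_sub {T : Type} {le : T -> T -> Prop} {A B : set T} :
  A `<=` B -> order_scattered le B -> order_scattered le A.
Proof. by move=> AB scB [f [fA femb]]; apply: scB; exists f; split=> // q; apply: AB. Qed.

Lemma card_fset_set_ltn {T : choiceType} (A B : set T) :
  finite_set B -> A `<=` B -> ~ B `<=` A ->
  (#|` fset_set A| < #|` fset_set B|)%N.
Proof.
move=> Bfin AB BA; have Afin := sub_finite_set AB Bfin.
apply: fproper_ltn_card; rewrite fproperE; apply/andP; split.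
  by rewrite -fset_set_sub.
by apply/negP; rewrite -fset_set_sub.
Qed.

Lemma finite_powerset_scattered {T : choiceType} {A : set T} :
  finite_set A -> order_scattered (fun B C : set T => B `<=` C) [set B | B `<=` A].
Proof.
move=> Afin [f [fA femb]].
have ffin q : finite_set (f q) by exact: sub_finite_set (fA q) Afin.
have card_chain n : (n <= #|` fset_set (f n%:R%R)|)%N.
  elim: n => [//|n IH]; apply: leq_ltn_trans IH _.
  apply: card_fset_set_ltn => //; first by apply/femb; rewrite ler_nat.
  by move/femb; rewrite ler_nat ltnn.
have := card_chain (#|` fset_set A|).+1; rewrite ltnNge => /negP[].
by apply: fsubset_leq_card; rewrite -fset_set_sub //; exact: fA.
Qed.

Lemma infinite_set_injection {T : Type} (A : set T) : infinite_set A ->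
  exists g : nat -> T, injective g /\ forall n, A (g n).
Proof.
move=> /infiniteP /card_leP [f].
exists (fun n => val (f (SigSub (mem_set (I : [set: nat] n))))); split.
- move=> m n /val_inj /(@inj _ _ _ f) eq_mn.
  by have := congr1 val (eq_mn (mem_set I) (mem_set I)).
- by move=> n; exact: set_valP.
Qed.

(* The rationals below q are sent injectively into X; distinct q give distinct
   sets since h y lies in the image of q exactly when y < q. *)
Lemma infinite_powerset_not_scattered {T : Type} {X : set T} : infinite_set X ->
  ~ order_scattered (fun B C : set T => B `<=` C) [set B | B `<=` X].
Proof.
move=> /infinite_set_injection [g [ginj gX]]; apply.
pose h (r : rat) := g (choice.pickle r).
have hinj : injective h by move=> r s /ginj; exact: (pcan_inj (@pickleK_inv _)).
exists (fun q => h @` [set r | (r < q)%R]); split.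
  by move=> q _ [r _ <-]; exact: gX.
move=> x y; split.
  by move=> xy _ [r /= rx <-]; exists r => //=; exact: lt_le_trans rx xy.
move=> sub; rewrite leNgt; apply/negP => yx.
have [r /= ry /hinj eq_ry] : (h @` [set r | (r < y)%R]) (h y) by apply: sub; exists y.
by move: ry; rewrite eq_ry ltxx.
Qed.

Definition composition_free {T : Type} (X : set (T * T)) : Prop :=
  forall a b c, X (a, b) -> ~ X (b, c).

Section StrictOrder.
Context {d : Order.disp_t} {P : porderType d}.

Lemma strict_orderE (a b : P) : strict_order P (a, b) <-> (a < b)%O.
Proof.
rewrite /strict_order /= lt_def; split.
  by move=> [-> neq_ab]; rewrite andbT; apply/eqP => eq_ba; apply: neq_ab.
by move=> /andP[neq_ba ->]; split => // eq_ab; move: neq_ba; rewrite eq_ab eqxx.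
Qed.

Lemma powerset_composition_free_suborders {X : set (P * P)} :
  X `<=` strict_order P -> composition_free X ->
  [set Y | Y `<=` X] `<=` suborders P.
Proof.
move=> XS Xfree Y YX; split; first exact: subset_trans YX XS.
by move=> a b c /YX Xab /YX Xbc; case: (Xfree a b c Xab Xbc).
Qed.

Lemma seq_has_maximal (s : seq P) : s != [::] ->
  exists2 m, m \in s & forall y, y \in s -> ~ (m < y)%O.
Proof.
elim: s => [//|x s IH] _; have [-> | /IH[m ms mmax]] := eqVneq s [::].
  by exists x; rewrite ?mem_seq1 // => y; rewrite mem_seq1 => /eqP ->; rewrite ltxx.
have [mx | xm] := boolP (m < x)%O.
  exists x; first exact: mem_head.
  move=> y; rewrite in_cons => /orP[/eqP -> | ys]; first by rewrite ltxx.
  by move=> xy; apply: (mmax y ys); exact: lt_trans xy.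
exists m; first by rewrite in_cons ms orbT.
by move=> y; rewrite in_cons => /orP[/eqP -> | /mmax]; first exact/negP.
Qed.

Lemma exists_maximal_above (x y : P) :
  (x < y)%O -> finite_set [set z | (x < z)%O] ->
  exists m, (x < m)%O /\ forall z, ~ (m < z)%O.
Proof.
move=> xy /finite_seqP[s eq_s].
have in_s z : (x < z)%O <-> z \in s.
  by have /= -> := congr1 (fun A => A z) eq_s.
have [|m /in_s xm mmax] := @seq_has_maximal s.
  by apply/eqP => s0; move/in_s: xy; rewrite s0.
by exists m; split=> // z mz; apply: (mmax z _ mz); apply/in_s; exact: lt_trans mz.
Qed.

Lemma infinite_strict_order_composition_free :
  infinite_set (strict_order P) ->
  exists X : set (P * P), [/\ X `<=` strict_order P, composition_free X & infinite_set X].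
Proof.
move=> Sinf.
have [[a up_inf] | up_fin] := pselect (exists a : P, infinite_set [set b : P | (a < b)%O]).
  exists [set pq | pq.1 = a /\ (a < pq.2)%O]; split.
  - by move=> [x y] /= [-> ay]; apply/strict_orderE.
  - by move=> x y z /= [_ ay] [ya _]; move: ay; rewrite ya ltxx.
  - move=> /(finite_image snd) Xfin; apply: up_inf; apply: sub_finite_set Xfin.
    by move=> b ab; exists (a, b).
have {}up_fin (a : P) : finite_set [set b | (a < b)%O].
  by apply: contrapT => up_inf; apply: up_fin; exists a.
pose A := [set a : P | exists b, (a < b)%O].
have A_inf : infinite_set A.
  move=> Afin; apply: Sinf; apply: sub_finite_set (finite_setXR Afin (fun a _ => up_fin a)).
  by move=> [x y] /strict_orderE xy; split => //=; exists y.
exists [set pq | (pq.1 < pq.2)%O /\ forall z, ~ (pq.2 < z)%O]; split.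
- by move=> [x y] [xy _]; apply/strict_orderE.
- by move=> x y z [_ ymax] [yz _]; exact: ymax yz.
- move=> /(finite_image fst) Xfin; apply: A_inf; apply: sub_finite_set Xfin.
  move=> x [y /exists_maximal_above /(_ (up_fin x)) [m [xm mmax]]].
  by exists (x, m).
Qed.
End StrictOrder.

Theorem theorem6p2 (d : Order.disp_t) (P : porderType d) :
  order_scattered (fun R1 R2 : set (P * P)%type => R1 `<=` R2) (suborders P)
  <-> finite_set (strict_order P).
Proof.
split=> [scattered | Sfin].
  apply: contrapT => /infinite_strict_order_composition_free [X [XS Xfree Xinf]].
  apply: (infinite_powerset_not_scattered Xinf).
  exact: order_scattered_sub (powerset_composition_free_suborders XS Xfree) scattered.
apply: order_scattered_sub (finite_powerset_scattered Sfin).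
by move=> R [].
Qed.
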